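(* Let $n\ge1$, $k\in\{1,\dots,n\}$, $b>0$, $\bm d\in\mathbb R^n$ with $d_i>0$ for all $i$, $\tilde{\bm a}\in\mathbb R^n$, and let $Y\subseteq\mathbb R^n$ be nonempty. Consider $$\xi=\min_{\bm y\in Y}\ \tilde{\bm a}^\top\bm y+\max_{(\bm x,\bm z)\in\mathbb R^n\times[0,1]^n}\Big\{\bm x^\top\bm y:\ \sum_{i=1}^n\frac{(d_ix_i)^2}{z_i}\le b,\ \sum_{i=1}^nz_i\le k\Big\}.$$ For $\bm y\in\mathbb R^n$, let $(1),\dots,(n)$ be a permutation of $\{1,\dots,n\}$ with $(y_{(1)}/d_{(1)})^2\ge\cdots\ge(y_{(n)}/d_{(n)})^2$ and let $s(\bm y)=\sum_{i=1}^k(y_{(i)}/d_{(i)})^2$. Then $$\xi=\min_{\bm y\in Y}\ \tilde{\bm a}^\top\bm y+\sqrt{b\,s(\bm y)},$$ and moreover $\xi$ equals the optimal value of $$\min_{\bm y,\bm t,\lambda,\mu}\ \tilde{\bm a}^\top\bm y+\lambda b+\mu k+\sum_{i=1}^nt_i\quad\text{s.t.}\quad (y_i/d_i)^2\le4(t_i+\mu)\lambda\ (i=1,\dots,n),\ \bm y\in Y,\ \bm t\in\mathbb R^n_+,\ \lambda\ge0,\ \mu\ge0$$ (with ''min'' understood as infimum where needed).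
   Context: Division convention: $a/b=0$ if $a=b=0$, and $a/b=+\infty$ if $b=0$ and $a\ne0$, so the constraint $\sum_i (d_ix_i)^2/z_i\le b$ forces $x_i=0$ whenever $z_i=0$. *)

From HB Require Import structures.
From mathcomp Require Import all_boot all_order all_algebra.
From mathcomp Require Import all_classical all_reals all_analysis.
Set Implicit Arguments. Unset Strict Implicit. Unset Printing Implicit Defensive.
Import Order.TTheory GRing.Theory Num.Theory.
Local Open Scope classical_set_scope.
Local Open Scope ring_scope.

(* Division convention of the paper, valued in extended reals:
   a/b = 0 if a = b = 0, a/b = +oo if b = 0 and a <> 0. *)
Definition ediv (R : realType) (a b : R) : \bar R :=
  if b == 0 then (if a == 0 then 0%E else +oo%E) else (a / b)%:E.

Definition dotv (R : realType) (n : nat) (u v : 'I_n -> R) : R :=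
  \sum_(i < n) u i * v i.

Definition inner_feas (R : realType) (n k : nat) (b : R) (d : 'I_n -> R)
    : set (('I_n -> R) * ('I_n -> R)) :=
  [set xz | (forall i, 0 <= xz.2 i <= 1) /\
            (\sum_(i < n) ediv ((d i * xz.1 i) ^+ 2) (xz.2 i) <= b%:E)%E /\
            \sum_(i < n) xz.2 i <= k%:R].

Definition inner_val (R : realType) (n k : nat) (b : R) (d y : 'I_n -> R) : \bar R :=
  ereal_sup [set (dotv xz.1 y)%:E | xz in inner_feas k b d].

Definition xi_val (R : realType) (n k : nat) (b : R) (d a : 'I_n -> R)
    (Y : set ('I_n -> R)) : \bar R :=
  ereal_inf [set ((dotv a y)%:E + inner_val k b d y)%E | y in Y].

Definition s_val (R : realType) (n k : nat) (d y : 'I_n -> R) : R :=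
  \sum_(w <- take k (sort (fun u v : R => v <= u)
                        [seq (y i / d i) ^+ 2 | i <- enum 'I_n])) w.

Definition sqrt_obj_val (R : realType) (n k : nat) (b : R) (d a : 'I_n -> R)
    (Y : set ('I_n -> R)) : \bar R :=
  ereal_inf [set (dotv a y + Num.sqrt (b * s_val k d y))%:E | y in Y].

Definition conic_val (R : realType) (n k : nat) (b : R) (d a : 'I_n -> R)
    (Y : set ('I_n -> R)) : \bar R :=
  ereal_inf [set (dotv a ytlm.1.1.1 + ytlm.1.2 * b + ytlm.2 * k%:R
                   + \sum_(i < n) ytlm.1.1.2 i)%:E
            | ytlm in [set ytlm : ('I_n -> R) * ('I_n -> R) * R * R |
                let: (y, t, lam, mu) := ytlm in
                Y y /\ (forall i, 0 <= t i) /\ 0 <= lam /\ 0 <= mu /\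
                (forall i, (y i / d i) ^+ 2 <= 4 * (t i + mu) * lam)]].

From HB Require Import structures.
From mathcomp Require Import all_boot all_order all_algebra.
From mathcomp Require Import all_classical all_reals all_analysis.
From mathcomp Require Import ring lra.
Set Implicit Arguments. Unset Strict Implicit. Unset Printing Implicit Defensive.
Import Order.TTheory GRing.Theory Num.Theory.
Local Open Scope classical_set_scope.
Local Open Scope ring_scope.

(* Everything reduces to a pointwise statement in y.  Writing v_i = (y_i/d_i)^2
   and S for the indices of the k largest v_i, with a threshold m separating
   S from its complement:
   - the inner maximum over (x, z) equals sqrt(b s(y)): for every lam > 0,
     completing a square in each term bounds x^T y by
     lam b + (sum_i z_i v_i) / (4 lam), the knapsack bound gives
     sum_i z_i v_i <= s(y), and minimizing over lam gives sqrt(b s(y)); the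
     value is attained with z the indicator of S and x proportional to y/d^2;
   - the conic objective is at least lam b + s(y)/(4 lam) >= sqrt(b s(y)) at
     any feasible point (AM-GM), with equality at lam = sqrt(b s)/(2b),
     mu = m/(4 lam), t_i = (v_i - m)^+/(4 lam).
   The two infima over y in Y then agree by a cofinality argument on sets of
   extended reals. *)

Section TopK.
Variables (T : finType) (R : realDomainType) (v : T -> R).

Lemma topk_set (k : nat) : (k <= #|T|)%N ->
  exists S : {set T},
  [/\ #|S| = k,
      \sum_(w <- take k (sort (fun u w : R => w <= u) [seq v i | i <- enum T])) w
        = \sum_(i in S) v i
    & forall i j, i \in S -> j \notin S -> v j <= v i].
Proof.
move=> kT.
pose r := relpre v (fun u w : R => w <= u).
set l := sort r (enum T).
have l_uniq : uniq l by rewrite sort_uniq enum_uniq.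
have ut : uniq (take k l) by apply: take_uniq.
exists [set i in take k l]; split.
- rewrite cardsE (card_uniqP ut) size_take size_sort -cardT.
  by case: ltnP => // h; apply/eqP; rewrite eqn_leq kT h.
- rewrite sort_map -map_take big_map big_uniq //.
  by apply: eq_bigl => i; rewrite inE.
- move=> i j; rewrite !inE => iS jS.
  have r_trans : transitive r by move=> x y z /= h1 h2; exact: le_trans h2 h1.
  have r_total : total r by move=> x y /=; exact: le_total.
  have := sort_sorted r_total (enum T).
  rewrite -/l (sorted_pairwise r_trans) -{1}(cat_take_drop k l) pairwise_cat.
  case/and3P => /allrelP head_dominates _ _; apply: head_dominates iS _.
  have : j \in l by rewrite mem_sort mem_enum.
  by rewrite -{1}(cat_take_drop k l) mem_cat (negbTE jS).
Qed.

Hypothesis v_ge0 : forall i, 0 <= v i.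

Lemma topk_threshold (S : {set T}) :
  (forall i j, i \in S -> j \notin S -> v j <= v i) ->
  exists2 m, 0 <= m &
    (forall j, j \notin S -> v j <= m) /\ (forall i, i \in S -> m <= v i).
Proof.
move=> S_dominates; exists (\big[Num.max/0]_(j | j \notin S) v j).
  by apply: (big_ind (fun x => 0 <= x)) => // x y x0 y0; rewrite le_max x0.
split=> [j jS|i iS]; first exact: le_bigmax_cond.
by apply/bigmax_leP; split=> // j; exact: S_dominates.
Qed.

Lemma knapsack_bound (k : nat) (z : T -> R) (S : {set T}) (m : R) :
  #|S| = k -> 0 <= m ->
  (forall j, j \notin S -> v j <= m) -> (forall i, i \in S -> m <= v i) ->
  (forall i, 0 <= z i <= 1) -> \sum_i z i <= k%:R ->
  \sum_i z i * v i <= \sum_(i in S) v i.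
Proof.
move=> cardS m0 v_out v_in z01 sum_z.
have -> : \sum_i z i * v i = \sum_i z i * (v i - m) + m * \sum_i z i.
  by rewrite mulr_sumr -big_split; apply: eq_bigr => i _ /=; ring.
have -> : \sum_(i in S) v i = \sum_i (if i \in S then v i - m else 0) + m * k%:R.
  by rewrite -big_mkcond /= sumrB sumr_const cardS mulr_natr; ring.
apply: lerD; last exact: ler_wpM2l.
apply: ler_sum => i _; have /andP[z0 z1] := z01 i.
case: ifP => iS; [have := v_in i iS | have := v_out i (negbT iS)]; nra.
Qed.

Lemma topk_sum_eq0 (S : {set T}) (m : R) :
  (0 < #|S|)%N ->
  (forall j, j \notin S -> v j <= m) -> (forall i, i \in S -> m <= v i) ->
  \sum_(i in S) v i = 0 -> forall i, v i = 0.
Proof.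
move=> /card_gt0P[i0 i0S] v_out v_in sum0.
have v_S i : i \in S -> v i = 0 by move=> iS; exact: (psumr_eq0P (fun j _ => v_ge0 j) sum0).
have m0 : m <= 0 by rewrite -(v_S i0 i0S); exact: v_in.
move=> i; case: (boolP (i \in S)) => iS; first exact: v_S.
by apply/eqP; rewrite eq_le v_ge0 andbT (le_trans (v_out i iS) m0).
Qed.

End TopK.

Lemma s_val_topk (R : realType) (n k : nat) (d y : 'I_n -> R) : (k <= n)%N ->
  exists S : {set 'I_n}, exists m : R,
  [/\ #|S| = k, s_val k d y = \sum_(i in S) (y i / d i) ^+ 2, 0 <= m,
      forall j, j \notin S -> (y j / d j) ^+ 2 <= m
    & forall i, i \in S -> m <= (y i / d i) ^+ 2].
Proof.
move=> kn; pose v i := (y i / d i) ^+ 2.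
have [|S [cardS sumS S_dominates]] := @topk_set _ _ v k; first by rewrite card_ord.
have [m m0 [v_out v_in]] := topk_threshold (fun i => sqr_ge0 (y i / d i)) S_dominates.
by exists S, m; split; rewrite // /s_val sumS.
Qed.

Lemma s_val_ge0 (R : realType) (n k : nat) (d y : 'I_n -> R) : (k <= n)%N ->
  0 <= s_val k d y.
Proof.
move=> /(s_val_topk d y)[S [m [_ -> _ _ _]]].
by rewrite sumr_ge0 // => i _; exact: sqr_ge0.
Qed.

Section SqrtAffine.
Variables (R : rcfType) (b : R).
Hypothesis b_gt0 : 0 < b.

(* AM-GM: the majorant always dominates sqrt(b s). *)
Lemma sqrt_le_affine (s lam : R) : 0 <= s -> 0 < lam ->
  Num.sqrt (b * s) <= lam * b + s / (4 * lam).
Proof.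
move=> s0 lam0; set u := s / (4 * lam).
have s_eq : s = 4 * lam * u by rewrite /u mulrCA mulfV ?mulr1 // gt_eqF //; lra.
have u0 : 0 <= u by rewrite /u divr_ge0 //; lra.
have rhs0 : 0 <= lam * b + u by rewrite addr_ge0 // mulr_ge0 // ltW.
rewrite -(ger0_norm rhs0) -sqrtr_sqr; apply: ler_wsqrtr; rewrite s_eq.
have := sqr_ge0 (lam * b - u); rewrite !expr2; nra.
Qed.

Lemma sqrt_affine_attained (s : R) : 0 < s ->
  let lam := Num.sqrt (b * s) / (2 * b) in
  0 < lam /\ lam * b + s / (4 * lam) = Num.sqrt (b * s).
Proof.
move=> s0 lam; set q := Num.sqrt (b * s) in lam *.
have q0 : 0 < q by rewrite sqrtr_gt0 mulr_gt0.
have q2 : q ^+ 2 = b * s by rewrite sqr_sqrtr // mulr_ge0 // ltW.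
split; first by rewrite /lam divr_gt0 // mulr_gt0.
have -> : s = q ^+ 2 / b by rewrite q2 mulrC mulKf // gt_eqF.
by rewrite /lam; field; rewrite !gt_eqF.
Qed.

(* A lower bound of every majorant is a lower bound of sqrt(b s); for s = 0
   the majorant tends to 0 as lam -> 0. *)
Lemma le_sqrt_of_affine (s X : R) : 0 <= s ->
  (forall lam, 0 < lam -> X <= lam * b + s / (4 * lam)) ->
  X <= Num.sqrt (b * s).
Proof.
move=> s0 X_le; have [s_eq0|s_neq0] := eqVneq s 0; last first.
  have s_gt0 : 0 < s by rewrite lt_def s_neq0 s0.
  by have [lam0 <-] := sqrt_affine_attained s_gt0; exact: X_le.
rewrite s_eq0 mulr0 sqrtr0 leNgt; apply/negP => X0.
have := X_le (X / (2 * b)) (divr_gt0 X0 (mulr_gt0 (ltr0Sn _ 1) b_gt0)).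
have -> : X / (2 * b) * b = X / 2 by field; rewrite gt_eqF.
rewrite s_eq0 mul0r addr0; lra.
Qed.

End SqrtAffine.

(* Completing the square: a lower bound of the perspective term (d x)^2 / z
   that is linear in x and z. *)
Lemma perspective_lb (R : realFieldType) (lam z d x y : R) :
  0 < lam -> 0 < z -> d != 0 ->
  x * y / lam - z * (y / d) ^+ 2 / (4 * lam ^+ 2) <= (d * x) ^+ 2 / z.
Proof.
move=> lam0 z0 d_neq0; rewrite -subr_ge0.
have -> : (d * x) ^+ 2 / z - (x * y / lam - z * (y / d) ^+ 2 / (4 * lam ^+ 2))
   = (d * x - z * (y / d) / (2 * lam)) ^+ 2 / z.
  by field; rewrite d_neq0 !gt_eqF.
by rewrite divr_ge0 ?sqr_ge0 // ltW.
Qed.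

Lemma ediv_ge_perspective (R : realType) (lam z d x y : R) :
  0 < lam -> 0 <= z -> d != 0 ->
  ((x * y / lam - z * (y / d) ^+ 2 / (4 * lam ^+ 2))%:E
     <= ediv ((d * x) ^+ 2) z)%E.
Proof.
move=> lam0 z0 d_neq0; rewrite /ediv.
have [z_eq0|z_neq0] := eqVneq z 0; last first.
  by rewrite lee_fin perspective_lb // lt_def z_neq0 z0.
have [dx_eq0|] := eqVneq ((d * x) ^+ 2) 0; last by rewrite leey.
move/eqP: dx_eq0; rewrite sqrf_eq0 mulf_eq0 (negbTE d_neq0) /= => /eqP ->.
by rewrite z_eq0 lee_fin !mul0r subr0.
Qed.

Section InnerProblem.
Variables (R : realType) (n k : nat) (b : R) (d y : 'I_n -> R).
Hypotheses (kn : (k <= n)%N) (b_gt0 : 0 < b) (d_gt0 : forall i, 0 < d i).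

Let d_neq0 i : d i != 0. Proof. by rewrite gt_eqF. Qed.

(* Summing the perspective bounds against the budget b. *)
Lemma inner_dot_le_affine (xz : ('I_n -> R) * ('I_n -> R)) (lam : R) :
  inner_feas k b d xz -> 0 < lam ->
  dotv xz.1 y <= lam * b + (\sum_i xz.2 i * (y i / d i) ^+ 2) / (4 * lam).
Proof.
case: xz => x z [/= z01 [budget _]] lam0.
pose r i := x i * y i / lam - z i * (y i / d i) ^+ 2 / (4 * lam ^+ 2).
have sum_r : \sum_i r i <= b.
  rewrite -lee_fin -sumEFin; apply: le_trans budget; apply: lee_sum => i _.
  by have /andP[z0 _] := z01 i; exact: ediv_ge_perspective.
move: sum_r; rewrite /r sumrB -!mulr_suml /dotv.
set D := \sum_i x i * y i; set Q := \sum_i z i * (y i / d i) ^+ 2 => sum_r.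
rewrite -subr_le0.
have -> : D - (lam * b + Q / (4 * lam)) = lam * (D / lam - Q / (4 * lam ^+ 2) - b).
  by field; rewrite gt_eqF.
by apply: mulr_ge0_le0; [exact: ltW | rewrite subr_le0].
Qed.

Lemma inner_dot_le (xz : ('I_n -> R) * ('I_n -> R)) :
  inner_feas k b d xz -> dotv xz.1 y <= Num.sqrt (b * s_val k d y).
Proof.
move=> feas; have [S [m [cardS sumS m0 v_out v_in]]] := s_val_topk d y kn.
apply: le_sqrt_of_affine => //; first exact: s_val_ge0.
move=> lam lam0; apply: le_trans (inner_dot_le_affine feas lam0) _.
rewrite lerD2l; apply: ler_wpM2r; first by rewrite invr_ge0 mulr_ge0 // ltW.
rewrite sumS.
by case: feas => z01 [_ sum_z]; exact: (knapsack_bound (v := fun i => (y i / d i) ^+ 2) cardS m0 v_out v_in z01 sum_z).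
Qed.

(* The bound is attained with z the indicator of the top set S and
   x_i = al y_i / d_i^2 on S, for al = sqrt(b s)/s. *)
Lemma inner_witness : exists2 xz, inner_feas k b d xz &
  dotv xz.1 y = Num.sqrt (b * s_val k d y).
Proof.
have [S [m [cardS sumS _ _ _]]] := s_val_topk d y kn.
set s := s_val k d y in sumS *.
pose al := Num.sqrt (b * s) / s.
have al_s : al * s = Num.sqrt (b * s).
  have [->|s_neq0] := eqVneq s 0; first by rewrite !mulr0 sqrtr0.
  by rewrite /al mulfVK.
have al2_s : al ^+ 2 * s <= b.
  have [->|s_neq0] := eqVneq s 0; first by rewrite mulr0 ltW.
  rewrite /al expr_div_n sqr_sqrtr; last by rewrite mulr_ge0 ?s_val_ge0 // ltW.
  suff -> : b * s / s ^+ 2 * s = b by [].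
  by field; rewrite s_neq0.
exists ((fun i => if i \in S then al * y i / d i ^+ 2 else 0),
        (fun i => if i \in S then 1 else 0)); last first.
  rewrite /dotv -al_s sumS mulr_sumr [RHS]big_mkcond /=.
  apply: eq_bigr => i _; case: ifP => _; last by rewrite mul0r.
  by field; rewrite d_neq0.
split; [|split] => /=.
- by move=> i; case: ifP; rewrite ?lexx ?ler01.
- apply: le_trans (_ : ((al ^+ 2 * s)%:E <= b%:E)%E); last by rewrite lee_fin.
  rewrite sumS mulr_sumr -sumEFin [X in (_ <= X)%E]big_mkcond /= le_eqVlt; apply/orP; left.
  apply/eqP/eq_bigr => i _; rewrite /ediv; case: (boolP (i \in S)) => iS.
  + by rewrite oner_eq0 divr1; congr (_ %:E); field; rewrite d_neq0.
  + by rewrite eqxx mulr0 expr0n /= eqxx.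
- by rewrite -big_mkcond /= sumr_const cardS.
Qed.

Lemma inner_val_eq : inner_val k b d y = (Num.sqrt (b * s_val k d y))%:E.
Proof.
apply/eqP; rewrite eq_le; apply/andP; split.
  by apply: ge_ereal_sup => _ [xz feas <-]; rewrite lee_fin inner_dot_le.
by have [xz feas <-] := inner_witness; apply: ereal_sup_ubound; exists xz.
Qed.

End InnerProblem.

Section ConicProblem.
Variables (R : realType) (n k : nat) (b : R) (d y : 'I_n -> R).
Hypotheses (k_gt0 : (0 < k)%N) (kn : (k <= n)%N) (b_gt0 : 0 < b).

(* Weak duality: dividing the cone constraint by 4 lam and summing over the
   top set gives s/(4 lam) <= mu k + sum_i t_i. *)
Lemma conic_obj_ge (t : 'I_n -> R) (lam mu : R) :
  (forall i, 0 <= t i) -> 0 <= lam -> 0 <= mu ->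
  (forall i, (y i / d i) ^+ 2 <= 4 * (t i + mu) * lam) ->
  Num.sqrt (b * s_val k d y) <= lam * b + mu * k%:R + \sum_i t i.
Proof.
move=> t0 lam0 mu0 cone.
have [S [m [cardS sumS _ _ _]]] := s_val_topk d y kn.
have [lam_eq0|lam_neq0] := eqVneq lam 0.
  have v0 i : (y i / d i) ^+ 2 = 0.
    by apply/eqP; rewrite eq_le sqr_ge0 andbT; have := cone i; rewrite lam_eq0 mulr0.
  rewrite sumS big1 // mulr0 sqrtr0.
  by rewrite !addr_ge0 ?mulr_ge0 ?sumr_ge0 // ltW.
have lam_gt0 : 0 < lam by rewrite lt_def lam_neq0 lam0.
apply: le_trans (sqrt_le_affine b_gt0 (s_val_ge0 d y kn) lam_gt0) _.
rewrite -addrA lerD2l.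
have ratio_le : s_val k d y / (4 * lam) <= \sum_(i in S) (t i + mu).
  rewrite sumS mulr_suml; apply: ler_sum => i _.
  by rewrite ler_pdivrMr ?mulr_gt0 // mulrCA mulrA; exact: cone.
apply: le_trans ratio_le _.
rewrite big_split /= sumr_const cardS addrC mulr_natr lerD2l.
by rewrite [leRHS](bigID (mem S)) /= lerDl sumr_ge0.
Qed.

(* Strong duality: the threshold m yields an optimal (t, lam, mu). *)
Lemma conic_obj_attained : exists t : 'I_n -> R, exists lam : R, exists mu : R,
  [/\ forall i, 0 <= t i, 0 <= lam, 0 <= mu,
      forall i, (y i / d i) ^+ 2 <= 4 * (t i + mu) * lam &
      lam * b + mu * k%:R + \sum_i t i = Num.sqrt (b * s_val k d y)].
Proof.
have [S [m [cardS sumS m0 v_out v_in]]] := s_val_topk d y kn.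
set s := s_val k d y in sumS *.
have [s_eq0|s_neq0] := eqVneq s 0.
  have S_gt0 : (0 < #|S|)%N by rewrite cardS.
  have v0 := topk_sum_eq0 (fun i => sqr_ge0 (y i / d i)) S_gt0 v_out v_in
    (etrans (esym sumS) s_eq0).
  exists (fun _ => 0), 0, 0; split => // [i|]; first by rewrite v0 !mulr0.
  by rewrite s_eq0 !mulr0 !mul0r big1 // sqrtr0 !addr0.
have s_gt0 : 0 < s by rewrite lt_def s_neq0 s_val_ge0.
have [L_gt0 L_opt] := sqrt_affine_attained b_gt0 s_gt0.
set L := Num.sqrt (b * s) / (2 * b) in L_gt0 L_opt.
have L4_gt0 : 0 < 4 * L by rewrite mulr_gt0.
exists (fun i => if i \in S then ((y i / d i) ^+ 2 - m) / (4 * L) else 0), L,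
  (m / (4 * L)); split.
- by move=> i; case: ifP => iS //; rewrite divr_ge0 ?subr_ge0 ?v_in // ltW.
- exact: ltW.
- by rewrite divr_ge0 // ltW.
- move=> i; case: ifP => iS.
  + suff -> : 4 * (((y i / d i) ^+ 2 - m) / (4 * L) + m / (4 * L)) * L =
              (y i / d i) ^+ 2 by [].
    by move: (_ ^+ 2) => v; field; rewrite gt_eqF.
  + suff -> : 4 * (0 + m / (4 * L)) * L = m by exact: v_out (negbT iS).
    by field; rewrite gt_eqF.
- rewrite -L_opt -big_mkcond /= -mulr_suml sumrB sumr_const cardS -sumS.
  by rewrite -mulr_natr; field; rewrite gt_eqF.
Qed.

End ConicProblem.

Lemma ereal_inf_eq_cofinal (R : realType) (A B : set \bar R) : A `<=` B ->
  (forall x, B x -> exists2 y, A y & (y <= x)%E) -> ereal_inf A = ereal_inf B.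
Proof.
move=> AB B_above; apply/eqP; rewrite eq_le (ereal_inf_le_tmp AB) andbT.
apply: le_ereal_inf_tmp => x Bx; have [y Ay yx] := B_above x Bx.
exact: le_trans (ereal_inf_lbound Ay) yx.
Qed.

Theorem proposition6 (R : realType) (n k : nat) (b : R) (d a : 'I_n -> R)
    (Y : set ('I_n -> R)) :
  (1 <= n)%N -> (1 <= k <= n)%N -> 0 < b -> (forall i, 0 < d i) ->
  Y !=set0 ->
  xi_val k b d a Y = sqrt_obj_val k b d a Y /\
  xi_val k b d a Y = conic_val k b d a Y.
Proof.
move=> _ /andP[k_gt0 kn] b_gt0 d_gt0 _.
have xi_sqrt : xi_val k b d a Y = sqrt_obj_val k b d a Y.
  rewrite /xi_val /sqrt_obj_val; congr ereal_inf; apply: eq_imagel => y _.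
  by rewrite inner_val_eq.
split=> //; rewrite xi_sqrt; apply: ereal_inf_eq_cofinal.
- move=> _ [y Yy <-].
  have [t [lam [mu [t0 lam0 mu0 cone opt]]]] := conic_obj_attained d y k_gt0 kn b_gt0.
  by exists (y, t, lam, mu) => //=; rewrite -opt !addrA.
- move=> _ [[[[y t] lam] mu] /= [Yy [t0 [lam0 [mu0 cone]]]] <-].
  exists (dotv a y + Num.sqrt (b * s_val k d y))%:E; first by exists y.
  by rewrite lee_fin -!addrA lerD2l !addrA; exact: conic_obj_ge.
Qed.
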